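(* Write $M=\{f=1\}$ and $M^*=\{f^*=1\}$ for positively 1-homogeneous functions $f,f^*:\mathbb{R}^{2d}\to\mathbb{R}$. For a point $x$ in the exterior of both $M$ and $M^*$ we have $-n_+(x)=R^*\left(\frac{x}{f^*(x)}\right)$ and $-n_-(x)=R^*\left(\frac{-x}{f^*(-x)}\right)$.
   Context: Work in $\mathbb{R}^{2d}$ with its standard symplectic form $\omega$. Let $M\subset\mathbb{R}^{2d}$ be a smooth hypersurface bounding a quadratically convex domain containing the origin in its interior. For $x\in M$, $R(x)$ is the unique vector with $\omega(v,R(x))=0$ for all $v\in T_xM$ and $\omega(x,R(x))=1$ (the Reeb vector field); $M^*=R(M)$ is the symplectic polar of $M$, and $R^*$ is the corresponding Reeb map for $M^*$ (defined in the same way with $M^*$ in place of $M$). Write $a\sim b$ if the vectors $a,b$ are proportional with a positive coefficient. For $x$ in the exterior of $M$, $n_-(x)\in M$ and $n_+(x)\in M$ denote the unique points with $R(n_-(x))\sim -x$ and $R(n_+(x))\sim x$ (explicitly $n_\pm(x)=G^{-1}(\mp Jx/|x|)$, where $G$ is the outward normal Gauss map of $M$ and $J$ is multiplication by $\sqrt{-1}$ under $\mathbb{R}^{2d}=\mathbb{C}^d$). It is known that $R^*\circ R=-\mathrm{id}_M$. *)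

From HB Require Import structures.
From mathcomp Require Import all_boot all_order all_algebra.
From mathcomp Require Import all_classical all_reals all_analysis.
Set Implicit Arguments. Unset Strict Implicit. Unset Printing Implicit Defensive.
Import Order.TTheory GRing.Theory Num.Theory.
Import numFieldNormedType.Exports.
Local Open Scope classical_set_scope.
Local Open Scope ring_scope.

(* R^{2d} = C^d, coordinates (x_1..x_d, y_1..y_d) with z_k = x_k + i y_k. *)
Notation vec R d := 'rV[R]_(d + d).

Section Defs.
Variables (R : realType) (d : nat).

(* J = multiplication by sqrt(-1): (x, y) |-> (-y, x) *)
Definition Jmul (v : vec R d) : vec R d := row_mx (- rsubmx v) (lsubmx v).

Definition dotp (u v : vec R d) : R := \sum_i u ord0 i * v ord0 i.

(* standard symplectic form omega(u,v) = <J u, v> = sum_k dx_k /\ dy_k *)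
Definition omega (u v : vec R d) : R := dotp (Jmul u) v.

Definition posprop (a b : vec R d) : Prop := exists c : R, 0 < c /\ a = c *: b.

Definition pos_hom1 (f : vec R d -> R) : Prop :=
  forall (t : R) (x : vec R d), 0 < t -> f (t *: x) = t * f x.

Fixpoint iterD (vs : seq (vec R d)) (f : vec R d -> R) : vec R d -> R :=
  match vs with
  | [::] => f
  | v :: vs' => fun y => derive (iterD vs' f) y v
  end.

Definition smooth_away0 (f : vec R d -> R) : Prop :=
  forall (vs : seq (vec R d)) (x : vec R d), x != 0 -> differentiable (iterD vs f) x.

Definition convexf (f : vec R d -> R) : Prop :=
  forall (x y : vec R d) (t : R), 0 <= t <= 1 ->
    f ((1 - t) *: x + t *: y) <= (1 - t) * f x + t * f y.

Definition tangent (f : vec R d -> R) (x : vec R d) : set (vec R d) :=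
  [set v | 'd f x v = 0].

(* M = {f = 1} is a smooth hypersurface bounding a quadratically convex
   domain {f <= 1} containing the origin in its interior: f is the gauge *)
Definition qconvex_gauge (f : vec R d -> R) : Prop :=
  [/\ pos_hom1 f,
      (forall x, x != 0 -> 0 < f x),
      smooth_away0 f,
      convexf f &
      (* positive definite second fundamental form *)
      forall x v, f x = 1 -> v != 0 -> tangent f x v ->
        0 < derive (fun y => derive f y v) x v].

Definition isReeb (f : vec R d -> R) (x r : vec R d) : Prop :=
  (forall v, tangent f x v -> omega v r = 0) /\ omega x r = 1.

Definition Reeb (f : vec R d -> R) (x : vec R d) : vec R d :=
  xget 0 (isReeb f x).

Definition n_plus (f : vec R d -> R) (x : vec R d) : vec R d :=
  xget 0 [set y | f y = 1 /\ posprop (Reeb f y) x].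
Definition n_minus (f : vec R d -> R) (x : vec R d) : vec R d :=
  xget 0 [set y | f y = 1 /\ posprop (Reeb f y) (- x)].

End Defs.

From HB Require Import structures.
From mathcomp Require Import all_boot all_order all_algebra.
From mathcomp Require Import all_classical all_reals all_analysis.
From mathcomp Require Import ring lra.
Import Order.TTheory GRing.Theory Num.Theory.
Import numFieldNormedType.Exports.
Local Open Scope classical_set_scope.
Local Open Scope ring_scope.

(* The polar relation is an involution.  For [y] on [M = {f = 1}] with Reeb
   vector [z], the linear form [omega(y, .)] is bounded by [fstar]: writing
   [w / fstar w = R(y')], convexity of [f] gives
   [omega(y, w / fstar w) = df_y'(y) <= f y = 1].  It touches [fstar] at [z],
   so it is the differential of [fstar] at [z], and [-y] is then the Reeb
   vector of [M*] at [z]: [R* (R y) = -y].  Applied to [x / fstar x = R(n_+ x)]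
   this gives the claim for [n_+].  For [n_-] one needs [fstar (-x) > 0]: Reeb
   vectors of [M] are bounded, so [|w| <= C fstar w] wherever [fstar w > 0],
   and this lets positivity of [fstar] propagate along the segments from [x]
   to [Jx] and from [Jx] to [-x], which avoid the origin. *)

Section OneSidedDerivative.
Context {R : realType} {V : normedModType R}.

Lemma at_right_dnbhs0 : (0 : R)^'+ `=>` (0 : R)^'.
Proof.
move=> P; rewrite /dnbhs /within /=; apply: filterS => y Py /[dup] y0.
by rewrite lt0r => /andP[+ _]; apply: Py.
Qed.

Lemma cvg_at_right_ray (z v : V) : (fun t : R => t *: v + z) @ 0^'+ --> z.
Proof.
apply: cvg_at_right_filter; rewrite -[X in _ --> X](add0r z) -(scale0r v).
by apply: cvgD; [apply: cvgZr_tmp; exact: cvg_id | exact: cvg_cst].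
Qed.

Lemma derive_le_at_right (F : V -> R) a v c : derivable F a v ->
  (\forall t \near 0^'+, t^-1 * (F (t *: v + a) - F a) <= c) ->
  derive F a v <= c.
Proof.
move=> /cvg_ex[l hl] hn; rewrite /derive (cvg_lim _ hl) //.
apply: (cvgr_to_le (cvg_trans (cvg_app _ at_right_dnbhs0) hl)).
by apply: filterS hn => t; rewrite /shift /= addrC.
Qed.

Lemma derive_ge_at_right (F : V -> R) a v c : derivable F a v ->
  (\forall t \near 0^'+, c <= t^-1 * (F (t *: v + a) - F a)) ->
  c <= derive F a v.
Proof.
move=> /cvg_ex[l hl] hn; rewrite /derive (cvg_lim _ hl) //.
apply: (cvgr_to_ge (cvg_trans (cvg_app _ at_right_dnbhs0) hl)).
by apply: filterS hn => t; rewrite /shift /= addrC.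
Qed.

Lemma diff_self_of_hom (g : V -> R) y : differentiable g y ->
  (forall t, 0 < t -> g (t *: y) = t * g y) -> 'd g y y = g y.
Proof.
move=> gy hom; rewrite -deriveE //.
have dq : \forall t \near (0 : R)^'+, t^-1 * (g (t *: y + y) - g y) = g y.
  apply: filterS (nbhs_right_gt 0) => t t0.
  rewrite -{2}(scale1r y) -scalerDl hom; last lra.
  by field; rewrite gt_eqF.
apply/le_anti/andP; split.
  by apply: derive_le_at_right (diff_derivable gy) _; apply: filterS dq => t ->.
by apply: derive_ge_at_right (diff_derivable gy) _; apply: filterS dq => t ->.
Qed.

Lemma diff_eq_of_minorant (F L : V -> R) z : differentiable F z ->
  (forall a u w, L (a *: u + w) = a * L u + L w) ->
  (\forall w \near z, L w <= F w) -> L z = F z ->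
  forall v, 'd F z v = L v.
Proof.
move=> Fz Llin near_le Lz.
have LN u : L (- u) = - L u.
  have L0 : L 0 = 0 by have := Llin 1 0 0; rewrite scaler0 addr0 mul1r; lra.
  by have := Llin (-1) u 0; rewrite addr0 L0 addr0 scaleN1r mulN1r.
have le_d v : L v <= 'd F z v.
  rewrite -deriveE //; apply: derive_ge_at_right; first exact: diff_derivable.
  apply: filterS2 (nbhs_right_gt 0) (cvg_at_right_ray z v _ near_le) => t t0 /=.
  by rewrite Llin Lz ler_pdivlMl //; lra.
move=> v; apply/le_anti; rewrite le_d andbT.
by have := le_d (- v); rewrite LN linearN /= lerN2.
Qed.

End OneSidedDerivative.

Lemma gt0_propagation {R : realType} (F N : R -> R) (B : R) :
  {in `[0, 1], continuous F} -> {in `[0, 1], continuous N} ->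
  {in `[0, 1], forall s, 0 < N s} ->
  {in `[0, 1], forall s, 0 < F s -> N s <= B * F s ^+ 2} ->
  0 < F 0 -> 0 < F 1.
Proof.
move=> cF cN N_gt0 N_le F0; rewrite ltNge; apply/negP => F1.
have in01 : (0 : R) \in `[0, 1] /\ (1 : R) \in `[0, 1].
  by split; rewrite in_itv /= lexx ler01.
have K_gt : 0 < B by have := N_le 0 in01.1 F0; have := N_gt0 0 in01.1; nra.
(* [h] vanishes only where [F > 0] and [N = (B + 1) F^2], which the bound forbids. *)
pose h s := (B + 1) * (F s * `|F s|) - N s.
have ch : {within `[0, 1], continuous h}.
  apply: continuous_in_subspaceT => s; rewrite inE /= => s01.
  apply: cvgB; last exact: cN.
  apply: cvgM; first exact: cvg_cst.
  by apply: cvgM; [exact: cF | exact: cvg_norm (cF s s01)].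
have [c c01 hc0] : exists2 c, c \in `[0, 1] & h c = 0.
  apply: IVT => //; rewrite ge_min le_max.
  apply/andP; split; apply/orP; [right | left].
  - have := N_gt0 1 in01.2; rewrite /h ler0_norm //; nra.
  - have := N_le 0 in01.1 F0; rewrite /h gtr0_norm //; nra.
have Fc : 0 < F c.
  rewrite ltNge; apply/negP => Fc; have := N_gt0 c c01.
  by move: hc0; rewrite /h ler0_norm //; nra.
have := N_le c c01 Fc; have := N_gt0 c c01.
by move: hc0; rewrite /h gtr0_norm //; nra.
Qed.

Section Symplectic.
Context {R : realType} {d : nat}.
Implicit Types (a : R) (r u v w : vec R d).

Definition Jinv r : vec R d := row_mx (rsubmx r) (- lsubmx r).

Lemma JmulK r : Jmul (Jinv r) = r.
Proof. by rewrite /Jmul /Jinv row_mxKl row_mxKr opprK hsubmxK. Qed.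

Lemma JinvK r : Jinv (Jmul r) = r.
Proof. by rewrite /Jmul /Jinv row_mxKl row_mxKr opprK hsubmxK. Qed.

Lemma Jmul_eq0 r : (Jmul r == 0) = (r == 0).
Proof.
apply/eqP/eqP => [r0|->]; last by rewrite /Jmul !linear0 ?oppr0 row_mx0.
by rewrite -(JinvK r) r0 /Jinv !linear0 ?oppr0 row_mx0.
Qed.

Lemma dotpC u v : dotp u v = dotp v u.
Proof. by apply: eq_bigr => i _; rewrite mulrC. Qed.

Lemma dotpDr a u v w : dotp w (a *: u + v) = a * dotp w u + dotp w v.
Proof.
rewrite /dotp mulr_sumr -big_split /=; apply: eq_bigr => i _.
by rewrite !mxE; ring.
Qed.

Lemma dotpZr a u w : dotp w (a *: u) = a * dotp w u.
Proof. by rewrite /dotp mulr_sumr; apply: eq_bigr => i _; rewrite mxE; ring. Qed.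

Lemma dotp0r w : dotp w 0 = 0.
Proof. by rewrite /dotp big1 // => i _; rewrite mxE mulr0. Qed.

Lemma dotpDl a u v w : dotp (a *: u + v) w = a * dotp u w + dotp v w.
Proof. by rewrite dotpC dotpDr (dotpC w) (dotpC w). Qed.

Lemma dotp_gt0 u : u != 0 -> 0 < dotp u u.
Proof.
have sq_ge0 i : 0 <= u ord0 i * u ord0 i by rewrite -expr2 sqr_ge0.
move=> u0; rewrite lt0r sumr_ge0 ?andbT //; apply: contra u0.
rewrite psumr_eq0 // => /allP u0; apply/eqP/rowP => i; rewrite !mxE; apply/eqP.
by have := u0 i (mem_index_enum _); rewrite /= mulf_eq0 orbb.
Qed.

Lemma dotp_delta (i : 'I_(d + d)) w : dotp (delta_mx 0 i) w = w ord0 i.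
Proof.
rewrite /dotp (bigD1 i) //= big1 => [|j /negbTE ji].
  by rewrite mxE !eqxx mul1r addr0.
by rewrite mxE ji andbF mul0r.
Qed.

Lemma omega_antisym u v : omega u v = - omega v u.
Proof.
rewrite /omega /dotp !big_split_ord /= /Jmul opprD -!sumrN addrC.
by congr (_ + _); apply: eq_bigr => i _; rewrite ?row_mxEl ?row_mxEr !mxE; ring.
Qed.

Lemma omega_self u : omega u u = 0.
Proof. by have := omega_antisym u u; lra. Qed.

Lemma omegaDr a u v w : omega w (a *: u + v) = a * omega w u + omega w v.
Proof. exact: dotpDr. Qed.

Lemma omegaZr a u w : omega w (a *: u) = a * omega w u.
Proof. exact: dotpZr. Qed.

Lemma omegaZl a u w : omega (a *: u) w = a * omega u w.
Proof. by rewrite omega_antisym omegaZr (omega_antisym w) mulrN opprK. Qed.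

Lemma omegaNr u w : omega w (- u) = - omega w u.
Proof. by rewrite -scaleN1r omegaZr mulN1r. Qed.

Lemma omegaD u v w : omega (u + v) w = omega u w + omega v w.
Proof.
by rewrite omega_antisym -{1}[u]scale1r omegaDr mul1r opprD -!omega_antisym.
Qed.

Lemma omega_Jinv r w : omega (Jinv r) w = dotp r w.
Proof. by rewrite /omega JmulK. Qed.

Lemma omega_inj r1 r2 : (forall v, omega v r1 = omega v r2) -> r1 = r2.
Proof.
move=> h; apply/eqP; rewrite -subr_eq0; apply: contraT => /dotp_gt0.
rewrite -omega_Jinv; set v := Jinv _.
by rewrite -[r1]scale1r omegaDr omegaNr h mul1r addrN ltxx.
Qed.

End Symplectic.

Section Reeb.
Context {R : realType} {d : nat}.
Variable g : vec R d -> R.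

Lemma isReeb_omega y r v : 'd g y y = 1 -> isReeb g y r -> omega v r = 'd g y v.
Proof.
move=> dyy [tang yr]; set a := 'd g y v.
have t : tangent g y (v - a *: y).
  by rewrite /tangent /= linearB linearZ /= dyy -/a -[a%:A]/(a * 1) mulr1 subrr.
have -> : v = (v - a *: y) + a *: y by rewrite subrK.
by rewrite omegaD omegaZl (tang _ t) yr mulr1 add0r.
Qed.

Lemma isReeb_ReebE y r : 'd g y y = 1 -> isReeb g y r -> Reeb g y = r.
Proof.
move=> dyy yr; apply: xget_unique => // r' yr'.
apply: omega_inj => v.
by rewrite (isReeb_omega _ _ _ dyy yr) (isReeb_omega _ _ _ dyy yr').
Qed.

Lemma Reeb_neq0_isReeb y : Reeb g y != 0 -> isReeb g y (Reeb g y).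
Proof.
rewrite /Reeb; have [ex _|nex] := pselect (exists r, isReeb g y r).
  exact: xgetPex.
by rewrite xgetPN ?eqxx // => r yr; apply: nex; exists r.
Qed.

End Reeb.

Section PositivelyHomogeneous.
Context {R : realType} {d : nat} {g : vec R d -> R}.
Hypothesis g_hom : pos_hom1 g.

Lemma pos_hom1_0 : g 0 = 0.
Proof. by have := g_hom 2 0 (ltr0Sn R 1); rewrite scaler0 => E; lra. Qed.

Lemma pos_hom1_eq1_neq0 w : g w = 1 -> w != 0.
Proof. by apply: contra_eq_neq => ->; rewrite pos_hom1_0 eq_sym oner_neq0. Qed.

Lemma pos_hom1_normalize w : 0 < g w -> g ((g w)^-1 *: w) = 1.
Proof. by move=> w_gt0; rewrite g_hom ?invr_gt0 // mulVf ?gt_eqF. Qed.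

End PositivelyHomogeneous.

Section GaugeAndPolar.
Context {R : realType} {d : nat}.
Variable f : vec R d -> R.
Hypotheses (f_hom : pos_hom1 f) (f_ge0 : forall x, 0 <= f x).
Hypotheses (f_diff : forall y, y != 0 -> differentiable f y) (f_conv : convexf f).

Lemma gauge_subadd a b : f (a + b) <= f a + f b.
Proof.
have half : 1 - 2^-1 = 2^-1 :> R by field.
have E : a + b = (1 - 2^-1) *: (2 *: a) + 2^-1 *: (2 *: b).
  by rewrite half !scalerA mulVf ?pnatr_eq0 // !scale1r.
have half01 : 0 <= (2 : R)^-1 <= 1 by apply/andP; split; lra.
rewrite E; apply: le_trans (f_conv _ _ _ half01) _.
by rewrite half !f_hom ?ltr0n // !mulrA mulVf ?pnatr_eq0 // !mul1r.
Qed.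

Lemma diff_gauge_self y : y != 0 -> 'd f y y = f y.
Proof. by move=> y0; apply: diff_self_of_hom (f_diff _ y0) _ => t; apply: f_hom. Qed.

Lemma diff_gauge_le y v : y != 0 -> 'd f y v <= f v.
Proof.
move=> y0; rewrite -deriveE; last exact: f_diff.
apply: derive_le_at_right; first exact: diff_derivable (f_diff _ y0).
apply: filterS (nbhs_right_gt 0) => t t_gt0; rewrite ler_pdivrMl //.
by have := gauge_subadd (t *: v) y; rewrite f_hom //; lra.
Qed.

Lemma isReeb_gauge_omega y r v : f y = 1 -> isReeb f y r -> omega v r = 'd f y v.
Proof.
move=> fy; apply: isReeb_omega.
by rewrite diff_gauge_self ?fy // (pos_hom1_eq1_neq0 f_hom _ fy).
Qed.

Lemma isReeb_gauge_bounded : exists2 B, 0 <= B &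
  forall y r, f y = 1 -> isReeb f y r -> dotp r r <= B.
Proof.
pose u i := Jinv (delta_mx 0 i : vec R d).
exists (\sum_i (f (u i) + f (- u i)) ^+ 2) => [|y r fy yr].
  by apply: sumr_ge0 => i _; rewrite sqr_ge0.
rewrite /dotp; apply: ler_sum => i _; rewrite -expr2.
(* The coordinates of [r] are values of [df_y], bounded on both sides by [f]. *)
have ri : r ord0 i = 'd f y (u i).
  by rewrite -dotp_delta -omega_Jinv (isReeb_gauge_omega _ _ _ fy yr).
have y0 := pos_hom1_eq1_neq0 f_hom _ fy.
have := diff_gauge_le y (u i) y0; have := diff_gauge_le y (- u i) y0.
rewrite linearN /= -ri; have := f_ge0 (u i); have := f_ge0 (- u i); nra.
Qed.

Variable fstar : vec R d -> R.
Hypothesis fstar_hom : pos_hom1 fstar.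
Hypothesis fstar_diff : forall z, z != 0 -> differentiable fstar z.
Hypothesis polar_level1 :
  forall z, fstar z = 1 <-> exists2 y, f y = 1 & z = Reeb f y.

Lemma fstar_eq1_isReeb w : fstar w = 1 -> exists2 y, f y = 1 & isReeb f y w.
Proof.
move=> /[dup] fw /polar_level1[y fy wE]; exists y => //; rewrite wE.
by apply: Reeb_neq0_isReeb; rewrite -wE (pos_hom1_eq1_neq0 fstar_hom _ fw).
Qed.

Lemma omega_le_fstar y w : f y = 1 -> 0 < fstar w -> omega y w <= fstar w.
Proof.
move=> fy w_gt0.
have [y' fy' y'w] := fstar_eq1_isReeb _ (pos_hom1_normalize fstar_hom _ w_gt0).
have := diff_gauge_le y' y (pos_hom1_eq1_neq0 f_hom _ fy').
rewrite -(isReeb_gauge_omega _ _ _ fy' y'w) omegaZr fy.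
by rewrite ler_pdivrMl // mulr1.
Qed.

Lemma fstar_norm_bound : exists2 B, 0 <= B &
  forall w, 0 < fstar w -> dotp w w <= B * fstar w ^+ 2.
Proof.
have [B B_ge0 bound] := isReeb_gauge_bounded; exists B => // w w_gt0.
have [y fy yw] := fstar_eq1_isReeb _ (pos_hom1_normalize fstar_hom _ w_gt0).
have := bound _ _ fy yw; rewrite dotpZr dotpC dotpZr mulrA -expr2 exprVn.
by rewrite ler_pdivrMl ?exprn_gt0 // mulrC.
Qed.

Lemma Reeb_fstar_Reeb y z :
  f y = 1 -> isReeb f y z -> fstar z = 1 -> Reeb fstar z = - y.
Proof.
move=> fy yz fz; have z0 := pos_hom1_eq1_neq0 fstar_hom _ fz.
have yz1 : omega y z = 1 by case: yz.
have near_pos : \forall w \near z, 0 < fstar w.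
  apply: (cvgr_gt _ (differentiable_continuous (fstar_diff _ z0))).
  by rewrite fz ltr01.
have dz : forall v, 'd fstar z v = omega y v.
  apply: diff_eq_of_minorant.
  - exact: fstar_diff.
  - by move=> *; rewrite omegaDr.
  - by apply: filterS near_pos => w; exact: omega_le_fstar.
  - by rewrite yz1 fz.
apply: isReeb_ReebE; first by rewrite dz.
split=> [v|]; last by rewrite omegaNr -omega_antisym.
by rewrite /tangent /= dz => yv; rewrite omegaNr -omega_antisym yv.
Qed.

Lemma fstar_gt0_orth a b : dotp a b = 0 -> a != 0 -> b != 0 ->
  0 < fstar a -> 0 < fstar b.
Proof.
move=> ab a0 b0 fa; pose g s := (1 - s) *: a + s *: b.
have g1 : g 1 = b by rewrite /g subrr scale0r add0r scale1r.
have g_neq0 s : g s != 0.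
  apply/eqP => gs0; have : dotp a (g s) = (1 - s) * dotp a a.
    by rewrite dotpDr dotpZr ab mulr0 addr0.
  rewrite gs0 dotp0r => /esym/eqP; rewrite mulf_eq0 (gt_eqF (dotp_gt0 _ a0)) orbF.
  by rewrite subr_eq0 => /eqP s1; move: gs0; rewrite -s1 g1; apply/eqP.
have gg s : dotp (g s) (g s) = (1 - s) * (1 - s) * dotp a a + s * s * dotp b b.
  by rewrite !(dotpDl, dotpDr, dotpZr) !(dotpC (s *: b)) !dotpZr ab; ring.
have [B _ bound] := fstar_norm_bound.
have c1s s : {for s, continuous (fun s : R => 1 - s)}.
  by apply: cvgB; [exact: cvg_cst | exact: cvg_id].
rewrite -g1; apply: (gt0_propagation (fun s => fstar (g s))
  (fun s => (1 - s) * (1 - s) * dotp a a + s * s * dotp b b) B).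
- move=> s _; apply: continuous_comp; last first.
    exact: differentiable_continuous (fstar_diff _ (g_neq0 s)).
  by apply: cvgD; apply: cvgZr_tmp; [exact: c1s | exact: cvg_id].
- move=> s _; apply: cvgD; apply: cvgM; try exact: cvg_cst.
  + by apply: cvgM; exact: c1s.
  + by apply: cvgM; exact: cvg_id.
- by move=> s _; rewrite -gg dotp_gt0 ?g_neq0.
- by move=> s _ /bound; rewrite gg.
- by rewrite /g subr0 scale1r scale0r addr0.
Qed.

(* Both [x] and [-x] are orthogonal to [Jx]. *)
Lemma fstar_oppr_gt0 x : x != 0 -> 0 < fstar x -> 0 < fstar (- x).
Proof.
move=> x0 fx; have Jx0 : Jmul x != 0 by rewrite Jmul_eq0.
have Jx_x : dotp (Jmul x) x = 0 := omega_self x.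
apply: (fstar_gt0_orth (Jmul x)) => //.
- by rewrite -scaleN1r dotpZr Jx_x mulr0.
- by rewrite oppr_eq0.
- by apply: (fstar_gt0_orth x) => //; rewrite dotpC.
Qed.

Lemma n_plus_polar w : 0 < fstar w -> - n_plus f w = Reeb fstar ((fstar w)^-1 *: w).
Proof.
move=> w_gt0; set c := (fstar w)^-1.
have [y0 fy0 y0w] := (polar_level1 _).1 (pos_hom1_normalize fstar_hom _ w_gt0).
have ex : exists y, f y = 1 /\ posprop (Reeb f y) w.
  by exists y0; split => //; exists c; rewrite -y0w invr_gt0.
rewrite /n_plus; have [fy [k [k_gt0 yw]]] := xgetPex 0 ex.
set y := xget _ _ in fy yw *.
have fR : fstar (Reeb f y) = 1 by apply/polar_level1; exists y.
have kc : k = c.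
  move: fR; rewrite yw fstar_hom // => kw1.
  by rewrite /c -[k](mulfK (lt0r_neq0 w_gt0)) kw1 mul1r.
have yR := Reeb_neq0_isReeb _ _ (pos_hom1_eq1_neq0 fstar_hom _ fR).
by rewrite -kc -yw (Reeb_fstar_Reeb _ _ fy yR fR).
Qed.

End GaugeAndPolar.

Theorem lemma2p6 (R : realType) (d : nat) (f fstar : vec R d -> R)
  (hf : qconvex_gauge f)
  (hfs_hom : pos_hom1 fstar)
  (hfs_diff : forall x : vec R d, x != 0 -> differentiable fstar x)
  (hMstar : forall z : vec R d,
      fstar z = 1 <-> exists2 y : vec R d, f y = 1 & z = Reeb f y)
  (x : vec R d) (hxM : 1 < f x) (hxMs : 1 < fstar x) :
  - n_plus f x = Reeb fstar ((fstar x)^-1 *: x) /\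
  - n_minus f x = Reeb fstar ((fstar (- x))^-1 *: (- x)).
Proof.
have [f_hom f_pos f_smooth f_conv _] := hf.
have f_ge0 y : 0 <= f y.
  by have [->|/f_pos/ltW//] := eqVneq y 0; rewrite pos_hom1_0.
have f_diff y : y != 0 -> differentiable f y := f_smooth [::] y.
have x0 : x != 0 by apply: contraTneq hxM => ->; rewrite pos_hom1_0 // ltr10.
have fstar_x : 0 < fstar x by apply: lt_trans hxMs.
split; apply: n_plus_polar => //.
by apply: (fstar_oppr_gt0 f).
Qed.
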